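(* Let $R$ be an integral domain and let $A=\mathrm{diag}(\lambda_1,\dots,\lambda_n)\in R^{n\times n}$ be a diagonal matrix. If $A+tI$ has a Smith form over $R[t]$, then every nonzero difference $\lambda_i-\lambda_j$ is a unit of $R$. In particular, for $R=\mathbb{Z}$, a diagonal matrix $A\in\mathbb{Z}^{n\times n}$ has the property that $A+tI$ has a Smith form over $\mathbb{Z}[t]$ if and only if its diagonal entries take at most two distinct values, and, when there are two, they differ by $1$.
   Context: A matrix over a commutative ring $S$ is in Smith form if it is diagonal with diagonal entries $s_1,s_2,\dots$ such that $s_i\mid s_{i+1}$ in $S$; a matrix $B$ has a Smith form over $S$ if $PBQ$ is in Smith form for some invertible matrices $P,Q$ over $S$. *)

From HB Require Import structures.
From mathcomp Require Import all_boot all_order all_algebra.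
Set Implicit Arguments. Unset Strict Implicit. Unset Printing Implicit Defensive.
Import GRing.Theory.
Local Open Scope ring_scope.

Definition dvdr (S : comUnitRingType) (a b : S) : Prop := exists c : S, b = c * a.

Definition smith_form (S : comUnitRingType) (n : nat) (B : 'M[S]_n) : Prop :=
  (forall i j : 'I_n, i != j -> B i j = 0) /\
  (forall i j : 'I_n, nat_of_ord j = (nat_of_ord i).+1 -> dvdr (B i i) (B j j)).

Definition has_smith_form (S : comUnitRingType) (n : nat) (B : 'M[S]_n) : Prop :=
  exists P Q : 'M[S]_n, P \in unitmx /\ Q \in unitmx /\ smith_form (P *m B *m Q).

Definition diag_plus_tI (R : idomainType) (n : nat) (lam : 'rV[R]_n) : 'M[{poly R}]_n :=
  map_mx polyC (diag_mx lam) + 'X%:M.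

From HB Require Import structures.
From mathcomp Require Import all_boot all_order all_algebra all_fingroup.
From mathcomp Require Import ring zify.
Import GRing.Theory.
Local Open Scope ring_scope.
Set Implicit Arguments. Unset Strict Implicit.

(* If P (A + tI) Q = D is in Smith form, its last diagonal entry s vanishes at every -lam_k,
   because some diagonal entry of D does and all of them divide s. The last row of
   P (A + tI) = D Q^-1 reads P_Nk (t + lam_k) = s (Q^-1)_Nk; since s vanishes at both -lam_i
   and -lam_j, evaluating at -lam_i shows that lam_i - lam_j divides every P_Nk(-lam_i), hence
   divides (P P^-1)_NN = 1.
   Conversely, for u = t + a an explicit unimodular 2x2 transformation turns a pair of
   diagonal entries (u, u + 1) into (1, u (u + 1)). Pairing off entries this way leaves a
   diagonal with entries in a divisibility chain 1 | w | c w, which sorts into a Smith form.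
   Over Z the nonzero differences are then +-1, so at most two adjacent values occur. *)

Section Divisibility.
Variable S : comUnitRingType.
Implicit Types a b c d x y : S.

Lemma dvdrr a : dvdr a a.
Proof. by exists 1; rewrite mul1r. Qed.

Lemma dvdr_trans a b c : dvdr a b -> dvdr b c -> dvdr a c.
Proof. by move=> [x ->] [y ->]; exists (y * x); rewrite mulrA. Qed.

Lemma dvdr0 d : dvdr d 0.
Proof. by exists 0; rewrite mul0r. Qed.

Lemma dvdr_add d x y : dvdr d x -> dvdr d y -> dvdr d (x + y).
Proof. by move=> [a ->] [b ->]; exists (a + b); rewrite mulrDl. Qed.

Lemma dvdr_mulr d x y : dvdr d x -> dvdr d (x * y).
Proof. by move=> [a ->]; exists (a * y); rewrite mulrAC. Qed.

Lemma dvdr_sum I (r : seq I) (P : pred I) (F : I -> S) d :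
  (forall i, P i -> dvdr d (F i)) -> dvdr d (\sum_(i <- r | P i) F i).
Proof. by move=> dF; apply: big_ind => //; [apply: dvdr0 | apply: dvdr_add]. Qed.

Lemma dvdr1_unit d : dvdr d 1 -> d \is a GRing.unit.
Proof. by move=> [c c_d]; apply/unitrPr; exists c; rewrite mulrC -c_d. Qed.

End Divisibility.

Section SmithForm.
Variables (S : comUnitRingType) (n : nat) (D : 'M[S]_n).
Hypothesis D_smith : smith_form D.

Lemma smith_form_diag : D = diag_mx (\row_k D k k).
Proof.
apply/matrixP => i j; rewrite !mxE; case: eqP => [->|/eqP ij] //.
by rewrite D_smith.1.
Qed.

Lemma smith_form_dvdr (k l : 'I_n) : (k <= l)%N -> dvdr (D k k) (D l l).
Proof.
move=> /subnK; move: (l - k)%N => m.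
elim: m l => [|m IHm] l lE.
  by rewrite (_ : l = k); [apply: dvdrr | apply: val_inj; rewrite /= -lE].
have lt_mk : (m + k < n)%N by apply: leq_ltn_trans (ltn_ord l); rewrite -lE addSn.
apply: dvdr_trans (IHm (Ordinal lt_mk) erefl) _.
by apply: D_smith.2; rewrite -lE.
Qed.

End SmithForm.

Lemma dvdr_horner_cofactor (R : idomainType) (s p q : {poly R}) (a b c : R) :
  a != b -> root s a -> root s b -> p * ('X - c%:P) = s * q -> dvdr (b - a) p.[a].
Proof.
move=> ne_ab sa sb pcE.
have [eq_ca|ne_ca] := eqVneq c a; last first.
  have /eqP : (p * ('X - c%:P)).[a] = 0 by rewrite pcE hornerM (rootP sa) mul0r.
  rewrite hornerM hornerXsubC mulf_eq0 subr_eq0 [a == _]eq_sym (negPf ne_ca) orbF.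
  by move/eqP->; apply: dvdr0.
have [s1 s1E] := factor_theorem _ _ sa.
have /factor_theorem [s2 s2E] : root s1 b.
  by move: sb; rewrite s1E rootM root_XsubC eq_sym (negPf ne_ab) orbF.
have {pcE} -> : p = s2 * ('X - b%:P) * q.
  apply: (mulIf (monic_neq0 (monicXsubC a))).
  by rewrite -eq_ca pcE s1E s2E eq_ca mulrAC.
by exists (- s2.[a] * q.[a]); rewrite !hornerE; ring.
Qed.

Lemma root_smith_form_last (R : idomainType) n (D : 'M[{poly R}]_n) (N : 'I_n) x :
  smith_form D -> (forall l : 'I_n, (l <= N)%N) -> root (\det D) x -> root (D N N) x.
Proof.
move=> D_smith N_max; rewrite {1}(smith_form_diag D_smith) det_diag.
rewrite /root horner_prod => /prodf_eq0 [l _]; rewrite mxE => /eqP Dl0.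
have [c ->] := smith_form_dvdr D_smith (N_max l).
by rewrite hornerM Dl0 mulr0.
Qed.

Lemma diag_plus_tIE (R : idomainType) n (lam : 'rV[R]_n) :
  diag_plus_tI lam = diag_mx (\row_k ('X + (lam 0 k)%:P)).
Proof.
apply/matrixP => r c; rewrite !mxE addrC.
by case: eqP; rewrite ?polyC0 ?addr0.
Qed.

Lemma smith_diag_plus_tI_unit_diff (R : idomainType) n (lam : 'rV[R]_n) :
  has_smith_form (diag_plus_tI lam) ->
  forall i j : 'I_n, lam 0 i - lam 0 j != 0 -> lam 0 i - lam 0 j \is a GRing.unit.
Proof.
case=> P [Q [P_unit [Q_unit]]]; move DE: (P *m _ *m Q) => D D_smith i j ne_ij.
have n_gt0 : (0 < n)%N := leq_ltn_trans (leq0n i) (ltn_ord i).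
have lt_n : (n.-1 < n)%N by rewrite prednK.
pose N := Ordinal lt_n.
have N_max (l : 'I_n) : (l <= N)%N by rewrite /= -ltnS prednK.
set s := D N N.
pose beta k := 'X - (- lam 0 k)%:P.
have tIE : diag_plus_tI lam = diag_mx (\row_k beta k).
  by rewrite diag_plus_tIE; congr diag_mx; apply/rowP => k; rewrite !mxE /beta polyCN opprK.
have s_root k : root s (- lam 0 k).
  apply: root_smith_form_last D_smith N_max _.
  rewrite -DE tIE !det_mulmx det_diag /root !hornerM horner_prod (bigD1 k) //=.
  by rewrite mxE hornerXsubC subrr !(mul0r, mulr0).
have P_row k : P N k * beta k = s * invmx Q N k.
  have : P *m diag_plus_tI lam = D *m invmx Q by rewrite -DE mulmxK.
  move/matrixP/(_ N k); rewrite tIE mul_mx_diag {1}(smith_form_diag D_smith).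
  by rewrite mul_diag_mx !mxE => ->.
have dvdr_P k : dvdr (lam 0 i - lam 0 j) (P N k).[- lam 0 i].
  rewrite (_ : lam 0 i - lam 0 j = - lam 0 j - - lam 0 i); last by ring.
  apply: dvdr_horner_cofactor (s_root i) (s_root j) (P_row k).
  by rewrite eqr_opp -subr_eq0.
apply: dvdr1_unit.
have sum1 : \sum_k P N k * invmx P k N = 1.
  by move/matrixP/(_ N N): (mulmxV P_unit); rewrite !mxE eqxx.
rewrite -[X in dvdr _ X](hornerC 1 (- lam 0 i)) polyC1 -sum1 horner_sum.
apply: dvdr_sum => k _.
by rewrite hornerM; apply/dvdr_mulr/dvdr_P.
Qed.

Section SmithFormConstruction.
Variable S : comUnitRingType.

Lemma has_smith_form_equiv n (P Q A : 'M[S]_n) :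
  P \in unitmx -> Q \in unitmx -> has_smith_form (P *m A *m Q) -> has_smith_form A.
Proof.
move=> P_unit Q_unit [P' [Q' [P'_unit [Q'_unit smithPAQ]]]].
exists (P' *m P), (Q *m Q'); rewrite !unitmx_mul P_unit Q_unit P'_unit Q'_unit.
by do 2!split => //; rewrite !mulmxA in smithPAQ *.
Qed.

Lemma perm_diag_mx n (s : 'S_n) (d : 'rV[S]_n) :
  perm_mx s *m diag_mx d *m perm_mx s^-1 = diag_mx (\row_k d 0 (s k)).
Proof.
rewrite -row_permE -col_permE; apply/matrixP => r c; rewrite !mxE.
by rewrite (inj_eq perm_inj).
Qed.

Lemma has_smith_form_diag_ranked n (d : 'rV[S]_n) (rank : S -> nat) :
  (forall k l, leq (rank (d 0 k)) (rank (d 0 l)) -> dvdr (d 0 k) (d 0 l)) ->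
  has_smith_form (diag_mx d).
Proof.
move=> rank_dvdr; pose leR x y := (rank x <= rank y)%N.
pose t := [tuple d 0 k | k < n]; pose srt := sort leR t.
have /tuple_permP [s srtE] : perm_eq srt t by rewrite perm_sort perm_refl.
apply: (has_smith_form_equiv (P := perm_mx s) (Q := perm_mx s^-1)); rewrite ?unitmx_perm //.
exists 1%:M, 1%:M; rewrite unitmx1 mul1mx mulmx1 perm_diag_mx; do 2!split => //.
have srt_nth (k : 'I_n) : nth 0 srt k = d 0 (s k).
  by rewrite srtE -tnth_nth !tnth_mktuple.
split=> [k l ne_kl | k l lE]; first by rewrite mxE (negPf ne_kl).
rewrite !mxE !eqxx !mulr1n; apply: rank_dvdr; rewrite -!srt_nth lE.
have /sortedP : sorted leR srt by apply: sort_sorted => x y; apply: leq_total.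
by rewrite size_sort size_tuple; apply; rewrite -lE ltn_ord.
Qed.

Lemma has_smith_form_diag_chain n (d : 'rV[S]_n) (w c : S) :
  (forall k, d 0 k \in [:: 1; w; c * w]) -> has_smith_form (diag_mx d).
Proof.
move=> d_chain.
pose rank x := if x == c * w then 2%N else if x == w then 1%N else 0%N.
apply: (has_smith_form_diag_ranked (rank := rank)) => k l.
move: (d_chain k); rewrite /rank !inE.
have [-> _|ne_kcw] := eqVneq (d 0 k) (c * w).
  by case: eqP => [-> _|_]; [apply: dvdrr | case: ifP].
have [-> _|ne_kw] := eqVneq (d 0 k) w.
  by case: eqP => [-> _|_]; [exists c | case: eqP => [-> _|//]; apply: dvdrr].
by rewrite !orbF => /eqP -> _; exists (d 0 l); rewrite mulr1.
Qed.

Definition pair_mx n (i j : 'I_n) (a b c e : S) (g : 'I_n -> S) : 'M[S]_n :=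
  \matrix_(r, s) if r == i then (if s == i then a else if s == j then b else 0)
    else if r == j then (if s == i then c else if s == j then e else 0)
    else (r == s)%:R * g r.

Section PairMatrix.
Variables (n : nat) (i j : 'I_n).
Hypothesis ne_ij : i != j.

Lemma sum_pair (F : 'I_n -> S) :
  (forall k, k != i -> k != j -> F k = 0) -> \sum_k F k = F i + F j.
Proof.
move=> F0; rewrite (bigD1 i) //= (bigD1 j) 1?eq_sym //= big1 ?addr0 // => k /andP[].
exact: F0.
Qed.

Lemma pair_mxM a b c e g a' b' c' e' g' :
  pair_mx i j a b c e g *m pair_mx i j a' b' c' e' g' =
  pair_mx i j (a * a' + b * c') (a * b' + b * e') (c * a' + e * c') (c * b' + e * e')
    (fun k => g k * g' k).
Proof.
have ne_ji : j != i by rewrite eq_sym.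
apply/matrixP => r s; rewrite !mxE.
have [->|ne_ri] := eqVneq r i.
  rewrite sum_pair ?mxE ?eqxx ?(negPf ne_ji); first by case: (s == i); case: (s == j); ring.
  by move=> k ne_ki ne_kj; rewrite mxE eqxx (negPf ne_ki) (negPf ne_kj) mul0r.
have [->|ne_rj] := eqVneq r j.
  rewrite sum_pair ?mxE ?eqxx ?(negPf ne_ji); first by case: (s == i); case: (s == j); ring.
  by move=> k ne_ki ne_kj; rewrite mxE eqxx (negPf ne_ji) (negPf ne_ki) (negPf ne_kj) mul0r.
rewrite (bigD1 r) //= big1 ?addr0 => [|k ne_kr].
  by rewrite !mxE eqxx (negPf ne_ri) (negPf ne_rj) mul1r; ring.
by rewrite !mxE (negPf ne_ri) (negPf ne_rj) eq_sym (negPf ne_kr) !mul0r.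
Qed.

Lemma eq_pair_mx a b c e g g' :
  (forall k, k != i -> k != j -> g k = g' k) -> pair_mx i j a b c e g = pair_mx i j a b c e g'.
Proof.
move=> eq_g; apply/matrixP => r s; rewrite !mxE.
by have [//|ne_ri] := eqVneq r i; have [//|ne_rj] := eqVneq r j; rewrite eq_g.
Qed.

Lemma diag_pair_mx (d : 'rV[S]_n) :
  diag_mx d = pair_mx i j (d 0 i) 0 0 (d 0 j) (fun k => d 0 k).
Proof.
have ne_ji : j != i by rewrite eq_sym.
apply/matrixP => r s; rewrite !mxE.
have [->|ne_ri] := eqVneq r i.
  by rewrite eq_sym; case: (s == i) => //; case: (s == j).
have [->|ne_rj] := eqVneq r j; last by rewrite mulrC mulr_natr.
have [->|ne_si] := eqVneq s i; first by rewrite (negPf ne_ji).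
by rewrite eq_sym; case: (s == j).
Qed.

Lemma pair_mx1 : 1%:M = pair_mx i j 1 0 0 1 (fun => 1).
Proof.
rewrite (_ : 1%:M = diag_mx (const_mx 1)); last by apply/matrixP => r s; rewrite !mxE.
by rewrite diag_pair_mx !mxE; apply: eq_pair_mx => k; rewrite mxE.
Qed.

End PairMatrix.

(* With v = u + 1: [[-1, 1], [v, -u]] * diag(u, v) * [[1, v], [1, u]] = diag(1, u v),
   and the two outer matrices have determinant -1. *)
Lemma has_smith_form_diag_pair n (i j : 'I_n) (d : 'rV[S]_n) (u : S) :
  i != j -> d 0 i = u -> d 0 j = u + 1 ->
  has_smith_form (diag_mx (\row_k if k == i then 1 else if k == j then u * (u + 1) else d 0 k)) ->
  has_smith_form (diag_mx d).
Proof.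
move=> ne_ij d_i d_j; set v := u + 1; set e := \row_k _ => smith_e.
have ne_ji : j != i by rewrite eq_sym.
have inv_unit (A B : 'M[S]_n) : A *m B = 1%:M -> A \in unitmx.
  by move=> /mulmx1_unit[].
pose P := pair_mx i j (-1) 1 v (-u) (fun => 1).
pose Q := pair_mx i j 1 v 1 u (fun => 1).
have P_unit : P \in unitmx.
  apply: (inv_unit _ (pair_mx i j u 1 v 1 (fun => 1))).
  by rewrite pair_mxM // (pair_mx1 ne_ij); congr pair_mx; rewrite ?mulr1 /v //; ring.
have Q_unit : Q \in unitmx.
  apply: (inv_unit _ (pair_mx i j (-u) v 1 (-1) (fun => 1))).
  by rewrite pair_mxM // (pair_mx1 ne_ij); congr pair_mx; rewrite ?mulr1 /v //; ring.
have PdQ : P *m diag_mx d *m Q = diag_mx e.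
  rewrite (diag_pair_mx ne_ij d) (diag_pair_mx ne_ij e) !pair_mxM // d_i d_j.
  rewrite !mxE eqxx (negPf ne_ji) eqxx.
  rewrite (eq_pair_mx _ _ _ _ (g' := fun k => e 0 k)) => [|k ne_ki ne_kj].
    by congr pair_mx; rewrite /v; ring.
  by rewrite !mxE (negPf ne_ki) (negPf ne_kj) mul1r mulr1.
by apply: has_smith_form_equiv P_unit Q_unit _; rewrite PdQ.
Qed.

Section DiagPairs.
Variable u : S.
Hypotheses (ne_u1 : u != 1) (ne_uvu : u * (u + 1) != u).

Lemma has_smith_form_diag_pairs n (d : 'rV[S]_n) :
  (forall k, d 0 k \in [:: 1; u; u + 1; u * (u + 1)]) -> has_smith_form (diag_mx d).
Proof.
have [m] := ubnP #|[pred k | d 0 k == u]|; elim: m d => // m IHm d lt_m d_in.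
case: (boolP ([exists k, d 0 k == u] && [exists k, d 0 k == u + 1])).
  case/andP=> /existsP[i /eqP d_i] /existsP[j /eqP d_j].
  have ne_ij : i != j.
    apply: contra_eqN d_j => /eqP <-; rewrite d_i -subr_eq0 opprD addrA subrr add0r.
    by rewrite oppr_eq0 oner_eq0.
  apply: (has_smith_form_diag_pair ne_ij d_i d_j); apply: IHm => [|k]; last first.
    rewrite mxE; case: eqP => _; first by rewrite !inE eqxx.
    by case: eqP => _ //; rewrite !inE eqxx !orbT.
  rewrite -ltnS; apply: leq_trans lt_m; apply/proper_card/properP; split.
    apply/subsetP => k; rewrite !inE mxE.
    have [->|ne_ki] := eqVneq k i; first by rewrite eq_sym (negPf ne_u1).
    by have [->|//] := eqVneq k j; rewrite (negPf ne_uvu).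
  by exists i; rewrite !inE ?mxE ?eqxx ?d_i // eq_sym.
rewrite negb_and => /orP[] /existsPn no_d.
  apply: (has_smith_form_diag_chain (w := u + 1) (c := u)) => k.
  by move: (d_in k) (no_d k); rewrite !inE; case: (d 0 k == u); rewrite ?orbT.
apply: (has_smith_form_diag_chain (w := u) (c := u + 1)) => k.
by move: (d_in k) (no_d k); rewrite !inE mulrC; case: (d 0 k == u + 1); rewrite ?orbT ?orbF.
Qed.

End DiagPairs.

End SmithFormConstruction.

Lemma two_values_smith_diag_plus_tI (R : idomainType) n (lam : 'rV[R]_n) (a : R) :
  (forall i, lam 0 i = a \/ lam 0 i = a + 1) -> has_smith_form (diag_plus_tI lam).
Proof.
move=> lam_a; rewrite diag_plus_tIE; pose u : {poly R} := 'X + a%:P.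
have size_u : size u = 2 by rewrite size_XaddC.
apply: (has_smith_form_diag_pairs (u := u)) => [||k].
- by apply: contra_eq_neq size_u => ->; rewrite size_poly1.
- by rewrite -subr_eq0 mulrDr mulr1 addrK mulf_eq0 orbb -size_poly_eq0 size_u.
rewrite mxE !inE; case: (lam_a k) => ->; first by rewrite eqxx orbT.
by rewrite polyCD addrA eqxx !orbT.
Qed.

Lemma int_two_values_of_unit_diff n (lam : 'rV[int]_n) :
  (forall i j : 'I_n, lam 0 i - lam 0 j != 0 -> lam 0 i - lam 0 j \is a GRing.unit) ->
  exists a : int, forall i : 'I_n, lam 0 i = a \/ lam 0 i = a + 1.
Proof.
move=> unit_diff.
have diff i j : lam 0 i - lam 0 j = 0 \/ lam 0 i - lam 0 j = 1 \/ lam 0 i - lam 0 j = -1.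
  have [|/unit_diff] := eqVneq (lam 0 i - lam 0 j) 0; first by left.
  by rewrite [_ \is a _]/= => /orP[] /eqP; auto.
case: n lam unit_diff diff => [|n] lam _ diff; first by exists 0; case.
case: (boolP [exists k, lam 0 k == lam 0 ord0 - 1]) => [/existsP[k /eqP lam_k]|/existsPn no_pred].
  by exists (lam 0 ord0 - 1) => i; have := diff i ord0; have := diff i k; rewrite lam_k; lia.
exists (lam 0 ord0) => i; have /eqP := no_pred i; have := diff ord0 i; have := diff i ord0.
lia.
Qed.

Theorem proposition8p9 :
  (forall (R : idomainType) (n : nat) (lam : 'rV[R]_n),
     has_smith_form (diag_plus_tI lam) ->
     forall i j : 'I_n, lam 0 i - lam 0 j != 0 -> lam 0 i - lam 0 j \is a GRing.unit)
  /\
  (forall (n : nat) (lam : 'rV[int]_n),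
     has_smith_form (diag_plus_tI lam) <->
     exists a : int, forall i : 'I_n, lam 0 i = a \/ lam 0 i = a + 1).
Proof.
split=> [|n lam]; first exact: smith_diag_plus_tI_unit_diff.
split=> [/smith_diag_plus_tI_unit_diff|[a]]; first exact: int_two_values_of_unit_diff.
exact: two_values_smith_diag_plus_tI.
Qed.
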